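(* If $A \subseteq \mathbb{N}$ is Turing incomputable (i.e. its characteristic sequence is not computable), then $\sigma_A : \mathbb{N} \to \mathbb{N}$ is a permutation of $\mathbb{N}$. In particular, if $A$ is bi-immune, then $\sigma_A$ is a permutation.
   Context: $\mathbb{N}$ denotes the non-negative integers. For $i \in \mathbb{N}$, $\sigma_{(i)}$ is the permutation of $\mathbb{N}$ swapping $i$ and $i+1$ and fixing all other numbers. For $A \subseteq \mathbb{N}$ with increasing enumeration $a_0 < a_1 < \cdots$, define $\sigma_A : \mathbb{N} \to \mathbb{N}$ by $\sigma_A(x) = \lim_{n \to \infty} (\sigma_{(a_0)} \circ \sigma_{(a_1)} \circ \cdots \circ \sigma_{(a_n)})(x)$ (the sequence is eventually constant for each $x$); if $A$ is finite, $\sigma_A$ is the finite composition, and $\sigma_\emptyset$ is the identity. Here $g \circ f$ means apply $f$ first. A set $A$ is immune if it is infinite and contains no infinite computably enumerable subset; $A$ is bi-immune if both $A$ and $\mathbb{N} - A$ are immune. *)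

From Stdlib Require Import Arith List.
Import ListNotations.

Inductive prf : Type :=
| PZero : prf
| PSucc : prf
| PProj : nat -> prf
| PComp : prf -> list prf -> prf
| PPrec : prf -> prf -> prf
| PMin  : prf -> prf.

Inductive ev : prf -> list nat -> nat -> Prop :=
| evZero : forall v, ev PZero v 0
| evSucc : forall x v, ev PSucc (x :: v) (S x)
| evProj : forall i v, i < length v -> ev (PProj i) v (nth i v 0)
| evComp : forall f gs v ws y,
    Forall2 (fun g w => ev g v w) gs ws -> ev f ws y -> ev (PComp f gs) v y
| evPrec0 : forall f g v y, ev f v y -> ev (PPrec f g) (0 :: v) y
| evPrecS : forall f g n v z y,
    ev (PPrec f g) (n :: v) z -> ev g (n :: z :: v) y ->
    ev (PPrec f g) (S n :: v) y
| evMin : forall f v n,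
    ev f (n :: v) 0 ->
    (forall m, m < n -> exists k, ev f (m :: v) (S k)) ->
    ev (PMin f) v n.

Definition computable (A : nat -> bool) : Prop :=
  exists p : prf, forall n, ev p [n] (if A n then 1 else 0).

Definition c_e (W : nat -> Prop) : Prop :=
  exists p : prf, forall n, W n <-> exists y, ev p [n] y.

Definition infinite_set (W : nat -> Prop) : Prop :=
  forall m, exists n, m <= n /\ W n.

Definition immune (A : nat -> bool) : Prop :=
  infinite_set (fun n => A n = true) /\
  forall W : nat -> Prop, c_e W -> infinite_set W ->
    ~ (forall n, W n -> A n = true).

Definition bi_immune (A : nat -> bool) : Prop :=
  immune A /\ immune (fun n => negb (A n)).

Definition swap (i x : nat) : nat :=
  if Nat.eqb x i then S i else if Nat.eqb x (S i) then i else x.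

(* sigma_prefix A N = sigma_(a_0) o sigma_(a_1) o ... o sigma_(a_k),
   where a_0 < ... < a_k are the elements of A below N (g o f = apply f first). *)
Fixpoint sigma_prefix (A : nat -> bool) (N : nat) : nat -> nat :=
  match N with
  | 0 => fun x => x
  | S N' => if A N' then fun x => sigma_prefix A N' (swap N' x)
            else sigma_prefix A N'
  end.

(* sigma_A(x) = y : the finite compositions applied to x are eventually equal to y. *)
Definition sigma_lim (A : nat -> bool) (x y : nat) : Prop :=
  exists N0, forall N, N0 <= N -> sigma_prefix A N x = y.

Definition is_permutation (f : nat -> nat) : Prop :=
  (forall x y, f x = f y -> x = y) /\ (forall y, exists x, f x = y).

From Stdlib Require Import Arith List Lia Classical.
Import ListNotations.

(* Write s_N for [sigma_prefix A N], a finite composition of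
   adjacent transpositions, hence a bijection of N.  Since the swaps indexed
   by i >= x + 1 fix x, the sequence s_N x is constant from N = x + 1 on, so
   sigma_A x = s_(x+1) x exists for every A and sigma_A is injective.
   Surjectivity needs an extra hypothesis: given y, pick n >= y with n not in
   A.  Then s_(n+1) = s_n maps {0..n} onto itself, so y = s_n x for some
   x <= n, and y = s_(n+1) x = sigma_A x.  Hence sigma_A is a permutation as
   soon as the complement of A is infinite.
   Both hypotheses of the theorem give an infinite complement: a set with
   finite complement is computable (a primitive recursive table lookup), and
   a bi-immune set has an immune, hence infinite, complement. *)

Lemma swap_involutive i x : swap i (swap i x) = x.
Proof.
  unfold swap; destruct (Nat.eqb_spec x i); [|destruct (Nat.eqb_spec x (S i))].
  - subst. destruct (Nat.eqb_spec (S i) i); [lia|]. now rewrite Nat.eqb_refl.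
  - subst. now rewrite Nat.eqb_refl.
  - destruct (Nat.eqb_spec x i); [lia|]. destruct (Nat.eqb_spec x (S i)); [lia|]. easy.
Qed.

Lemma swap_fixes i x : x < i \/ S i < x -> swap i x = x.
Proof. intros; unfold swap; destruct (Nat.eqb_spec x i); [|destruct (Nat.eqb_spec x (S i))]; lia. Qed.

Lemma swap_bounded i x n : x <= S i -> S i <= n -> swap i x <= n.
Proof. intros; unfold swap; destruct (Nat.eqb_spec x i); [|destruct (Nat.eqb_spec x (S i))]; lia. Qed.

Lemma sigma_prefix_injective A N x y :
  sigma_prefix A N x = sigma_prefix A N y -> x = y.
Proof.
  revert x y; induction N as [|N IH]; simpl; intros x y H; auto.
  destruct (A N); auto.
  apply IH in H. now rewrite <- (swap_involutive N x), <- (swap_involutive N y), H.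
Qed.

(* s_N x no longer changes once N >= x + 1: the new swaps fix x. *)
Lemma sigma_prefix_stable A x N :
  S x <= N -> sigma_prefix A N x = sigma_prefix A (S x) x.
Proof.
  induction N as [|N IH]; intros H; [lia|].
  destruct (Nat.eq_dec (S x) (S N)) as [E|E]; [now rewrite E|].
  rewrite <- IH by lia. simpl.
  destruct (A N); auto. rewrite swap_fixes; auto; lia.
Qed.

Lemma sigma_prefix_skip A N : A N = false -> sigma_prefix A (S N) = sigma_prefix A N.
Proof. intros HA. simpl. now rewrite HA. Qed.

Fixpoint sigma_prefix_inv (A : nat -> bool) (N : nat) : nat -> nat :=
  match N with
  | 0 => fun x => x
  | S N' => if A N' then fun y => swap N' (sigma_prefix_inv A N' y)
            else sigma_prefix_inv A N'
  end.

Lemma sigma_prefix_inv_spec A N y : sigma_prefix A N (sigma_prefix_inv A N y) = y.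
Proof.
  induction N as [|N IH]; simpl; auto. destruct (A N); auto. now rewrite swap_involutive.
Qed.

Lemma sigma_prefix_inv_fixes A N z : N < z -> sigma_prefix_inv A N z = z.
Proof.
  induction N as [|N IH]; simpl; intros; auto.
  destruct (A N); rewrite IH by lia; auto. apply swap_fixes; lia.
Qed.

Lemma sigma_prefix_inv_bounded A N y : y <= N -> sigma_prefix_inv A N y <= N.
Proof.
  revert y; induction N as [|N IH]; simpl; intros y H; [lia|].
  destruct (Nat.eq_dec y (S N)) as [E|E].
  - subst. pose proof (sigma_prefix_inv_fixes A N (S N) ltac:(lia)) as Hfix.
    destruct (A N); rewrite Hfix; [apply swap_bounded|]; lia.
  - assert (sigma_prefix_inv A N y <= N) by (apply IH; lia).
    destruct (A N); [apply swap_bounded|]; lia.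
Qed.

Lemma sigma_permutation_of_coinfinite A :
  infinite_set (fun n => A n = false) ->
  exists sigmaA : nat -> nat,
    (forall x, sigma_lim A x (sigmaA x)) /\ is_permutation sigmaA.
Proof.
  intros Hcoinf. exists (fun x => sigma_prefix A (S x) x). split; [|split].
  - intros x. exists (S x). intros; now apply sigma_prefix_stable.
  - intros x y H. apply (sigma_prefix_injective A (S (max x y))).
    now rewrite (sigma_prefix_stable A x), (sigma_prefix_stable A y) by lia.
  - intros y. destruct (Hcoinf y) as [n [Hyn HA]].
    exists (sigma_prefix_inv A n y).
    pose proof (sigma_prefix_inv_bounded A n y Hyn) as Hbound.
    rewrite <- (sigma_prefix_stable A _ (S n)) by lia.
    rewrite sigma_prefix_skip by exact HA. apply sigma_prefix_inv_spec.
Qed.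

Definition table_value (bs : list bool) (n : nat) : nat := if nth n bs true then 1 else 0.

Definition const_one : prf := PComp PSucc [PZero].

Lemma ev_const_one v : ev const_one v 1.
Proof. eapply evComp; [constructor; [apply evZero|constructor]|apply evSucc]. Qed.

(* Every such table is computed by a primitive recursive program: by
   recursion on n, read the first entry at 0 and the tail's program at n-1. *)
Lemma table_value_program bs : exists p, forall n, ev p [n] (table_value bs n).
Proof.
  induction bs as [|b bs [p Hp]].
  - exists const_one. intros n. unfold table_value. destruct n; apply ev_const_one.
  - exists (PPrec (if b then const_one else PZero) (PComp p [PProj 0])).
    induction n as [|n IHn].
    + apply evPrec0. unfold table_value; simpl. destruct b; [apply ev_const_one|apply evZero].
    + eapply evPrecS; [exact IHn|]. eapply evComp.
      * constructor; [|constructor]. apply (evProj 0 [n; table_value (b :: bs) n]). simpl; lia.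
      * apply Hp.
Qed.

(* A set containing every n >= m is the table of its first m values. *)
Lemma cofinite_computable A m : (forall n, m <= n -> A n = true) -> computable A.
Proof.
  intros Hcofin. destruct (table_value_program (map A (seq 0 m))) as [p Hp].
  exists p. intros n. specialize (Hp n). unfold table_value in Hp.
  replace (nth n (map A (seq 0 m)) true) with (A n) in Hp; auto.
  destruct (Nat.lt_ge_cases n m).
  - rewrite nth_indep with (d' := A 0) by (rewrite length_map, length_seq; lia).
    now rewrite map_nth, seq_nth.
  - rewrite nth_overflow by (rewrite length_map, length_seq; lia). auto.
Qed.

Lemma incomputable_coinfinite A : ~ computable A -> infinite_set (fun n => A n = false).
Proof.
  intros Hincomp m. apply NNPP. intros Hnone. apply Hincomp, (cofinite_computable A m).
  intros n Hn. destruct (A n) eqn:E; auto. exfalso; eauto.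
Qed.

Lemma bi_immune_coinfinite A : bi_immune A -> infinite_set (fun n => A n = false).
Proof.
  intros [_ [Hinf _]] m. destruct (Hinf m) as [n [Hn E]].
  exists n. split; auto. now destruct (A n).
Qed.

Theorem mainTheorem3 :
  (forall A : nat -> bool, ~ computable A ->
     exists sigmaA : nat -> nat,
       (forall x, sigma_lim A x (sigmaA x)) /\ is_permutation sigmaA) /\
  (forall A : nat -> bool, bi_immune A ->
     exists sigmaA : nat -> nat,
       (forall x, sigma_lim A x (sigmaA x)) /\ is_permutation sigmaA).
Proof.
  split; intros A HA; apply sigma_permutation_of_coinfinite.
  - now apply incomputable_coinfinite.
  - now apply bi_immune_coinfinite.
Qed.
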